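(* Fix $n\ge1$, $\tau>0$, $\beta\in(0,1)$, and use the notation of the context. For every $x\in\mathbb{R}^n$ with $|x|\le\beta R$, the total mass $\mu(x)=\int_{R-s}^{R+s}h(x,r)\,dr$ satisfies \[ \mu(x)=\big(1+O(N^{-1})\big)\frac{\beta^{N-3}}{\sqrt{\pi\tau}}\int_0^s\sigma^2\Big(1-\frac{\sigma^2+|x|^2}{2N\beta^2\tau}\Big)^{\frac{N-3}{2}}d\sigma, \] where $O(N^{-1})$ denotes a quantity bounded by a constant (possibly depending on $\beta,\tau$) times $N^{-1}$, the constant being independent of $N$ and $x$.
   Context: For $N\ge3$: $R=\sqrt{2N\tau}$, $\bar y\in\mathbb{R}^N$ with $|\bar y|=R$; for $|x|\le\beta R$, $s=s(x)=\sqrt{\beta^2R^2-|x|^2}$. $\gamma(\theta)=\gamma(N,\theta)$ is the fraction of the volume of $S^{N-1}$ contained in a geodesic ball of radius $\theta\in[0,\pi]$. For $r\in[R-s,R+s]$, the part of the sphere $\{|y|=r\}\subset\mathbb{R}^N$ inside $B_s(\bar y)$ is a spherical cap centered at $r\bar y/R$; $\theta(x,r)$ is its angular radius. $h(x,r)=r\,\gamma(\theta(x,r))$. *)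

From Stdlib Require Import Reals Lra List.
From Coquelicot Require Import Coquelicot.
Open Scope R_scope.

Definition normsq (x : list R) : R := fold_right (fun a acc => a * a + acc) 0 x.
Definition vnorm (x : list R) : R := sqrt (normsq x).

Definition Rad (N : nat) (tau : R) : R := sqrt (2 * INR N * tau).

Definition s_of (N : nat) (tau beta : R) (x : list R) : R :=
  sqrt (beta ^ 2 * Rad N tau ^ 2 - vnorm x ^ 2).

(* gamma(N,theta): fraction of the (surface) volume of S^{N-1} contained in a
   geodesic ball of radius theta, via the standard cap-area formula
   |cap_theta| / |S^{N-1}| = int_0^theta sin^{N-2} / int_0^pi sin^{N-2}. *)
Definition gamma (N : nat) (theta : R) : R :=
  RInt (fun phi => sin phi ^ (N - 2)) 0 theta /
  RInt (fun phi => sin phi ^ (N - 2)) 0 PI.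

(* theta(x,r): angular radius (seen from the origin) of the cap
   {|y| = r} /\ B_s(ybar), |ybar| = R.  A boundary point y of the cap has
   |y| = r, |y - ybar| = s, so by the law of cosines the angle between y and
   ybar is acos((r^2 + R^2 - s^2)/(2 r R)). *)
Definition theta (N : nat) (tau beta : R) (x : list R) (r : R) : R :=
  let Rr := Rad N tau in
  let s := s_of N tau beta x in
  acos ((r ^ 2 + Rr ^ 2 - s ^ 2) / (2 * r * Rr)).

Definition h (N : nat) (tau beta : R) (x : list R) (r : R) : R :=
  r * gamma N (theta N tau beta x r).

Definition mu (N : nat) (tau beta : R) (x : list R) : R :=
  RInt (h N tau beta x) (Rad N tau - s_of N tau beta x)
                        (Rad N tau + s_of N tau beta x).

(* beta^{N-3}/sqrt(pi tau) * int_0^s sigma^2 (1 - (sigma^2+|x|^2)/(2 N beta^2 tau))^{(N-3)/2} dsigma;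
   the base is >= 0 on [0,s], so  b^{(N-3)/2} = (sqrt b)^(N-3). *)
Definition mu_main (N : nat) (tau beta : R) (x : list R) : R :=
  beta ^ (N - 3) / sqrt (PI * tau) *
  RInt (fun sigma => sigma ^ 2 *
          sqrt (1 - (sigma ^ 2 + vnorm x ^ 2) / (2 * INR N * beta ^ 2 * tau)) ^ (N - 3))
       0 (s_of N tau beta x).

(* Write N = m + 3, so that gamma N = A / W with A t = int_0^t sin^(m+1) and
   W = int_0^pi sin^(m+1).  The mass has an exact closed form: the substitution
   r = sqrt (R^2 - s^2 + y^2) + y makes theta(x, r) the angle whose sine is
   sqrt (s^2 - y^2) / R, and A of that angle is int_y^s g for an explicit odd g;
   an integration by parts followed by a split into even and odd parts gives
     int_(R-s)^(R+s) r A(theta(x, r)) dr = 2 R^-(m+1) int_0^s y^2 (s^2 - y^2)^(m/2) dy.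
   Since 1 - (y^2 + |x|^2) / (2 N beta^2 tau) = (s^2 - y^2) / (beta R)^2, the main
   term is the same integral, and mu / mu_main = 2 sqrt (pi tau) / (R W) exactly.
   Wallis' identity (k+1) W_k W_(k+1) = 2 pi and the monotonicity of W_k squeeze this
   ratio into [1 - 2/N, 1], so C = 2 works for all n, tau and beta. *)

From Stdlib Require Import Reals Lra Lia List.
From Coquelicot Require Import Coquelicot.
Open Scope R_scope.

(* Coquelicot states integral identities in the carrier of a normed module, where
   ring and field do not recognise the equality; this restates the goal at type R. *)
Local Ltac as_R_eq := match goal with |- ?a = ?b => change (@eq R a b) end.
Local Ltac ring_R := as_R_eq; ring.

Local Ltac continuity_by_derive :=
  apply (ex_derive_continuous (K := R_AbsRing) (V := R_NormedModule)); auto_derive.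

Lemma RInt_opp_R (f : R -> R) a b :
  ex_RInt f a b -> RInt (fun x => - f x) a b = - RInt f a b.
Proof. exact (RInt_opp (V := R_CompleteNormedModule) f a b). Qed.

Lemma RInt_plus_R (f g : R -> R) a b :
  ex_RInt f a b -> ex_RInt g a b -> RInt (fun x => f x + g x) a b = RInt f a b + RInt g a b.
Proof. exact (RInt_plus (V := R_CompleteNormedModule) f g a b). Qed.

Lemma RInt_scal_R (f : R -> R) k a b :
  ex_RInt f a b -> RInt (fun x => k * f x) a b = k * RInt f a b.
Proof. exact (RInt_scal (V := R_CompleteNormedModule) f a b k). Qed.

Lemma ex_RInt_of_continuous (f : R -> R) a b :
  (forall x, continuous f x) -> ex_RInt f a b.
Proof.
  intros Hf; apply (ex_RInt_continuous (V := R_CompleteNormedModule)); intros x _; apply Hf.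
Qed.

Lemma is_derive_RInt_lower (f : R -> R) b t :
  (forall x, continuous f x) -> is_derive (fun y => RInt f y b) t (- f t).
Proof.
  intros Hf; apply (is_derive_RInt' (V := R_NormedModule) f _ t b); [|apply Hf].
  apply filter_forall; intros y; apply (RInt_correct (V := R_CompleteNormedModule)).
  now apply ex_RInt_of_continuous.
Qed.

Lemma continuous_RInt_lower (f : R -> R) b t :
  (forall x, continuous f x) -> continuous (fun y => RInt f y b) t.
Proof.
  intros Hf; apply (ex_derive_continuous (K := R_AbsRing) (V := R_NormedModule)).
  eexists; now apply is_derive_RInt_lower.
Qed.

Lemma RInt_reflect (f : R -> R) a b :
  (forall x, continuous f x) -> RInt (fun y => f (- y)) a b = RInt f (- b) (- a).
Proof.
  intros Hf.
  assert (Hfo : ex_RInt (fun y => f (- y)) a b).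
  { apply ex_RInt_of_continuous; intros x; apply (continuous_comp Ropp f); [|apply Hf].
    continuity_by_derive; auto. }
  assert (Hsub : RInt (fun y => -1 * f (- y)) a b = RInt f (- a) (- b)).
  { apply (RInt_comp (V := R_CompleteNormedModule) f Ropp (fun _ => -1)); intros x _;
      [apply Hf | split; [auto_derive; auto | apply continuous_const]]. }
  rewrite RInt_scal_R in Hsub by exact Hfo.
  rewrite <- (opp_RInt_swap (V := R_CompleteNormedModule) f) by now apply ex_RInt_of_continuous.
  rewrite <- Hsub; unfold opp; simpl; lra.
Qed.

Lemma RInt_odd (f : R -> R) a :
  (forall x, continuous f x) -> (forall x, f (- x) = - f x) -> RInt f (- a) a = 0.
Proof.
  intros Hf Hodd.
  assert (H := RInt_reflect f (- a) a Hf); rewrite Ropp_involutive in H.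
  rewrite (RInt_ext _ (fun y => - f y)), RInt_opp_R in H.
  - lra.
  - now apply ex_RInt_of_continuous.
  - intros; apply Hodd.
Qed.

Lemma RInt_even (f : R -> R) a :
  (forall x, continuous f x) -> (forall x, f (- x) = f x) -> RInt f (- a) a = 2 * RInt f 0 a.
Proof.
  intros Hf Heven.
  assert (H := RInt_reflect f 0 a Hf); rewrite Ropp_0 in H.
  rewrite (RInt_ext _ f) in H by (intros; apply Heven).
  rewrite <- (RInt_Chasles (V := R_CompleteNormedModule) f (- a) 0 a)
    by now apply ex_RInt_of_continuous.
  rewrite <- H; unfold plus; simpl; ring.
Qed.

Lemma RInt_by_parts (f df g dg : R -> R) a b :
  (forall x, is_derive f x (df x)) -> (forall x, is_derive g x (dg x)) ->
  (forall x, continuous df x) -> (forall x, continuous dg x) ->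
  RInt (fun x => df x * g x) a b = f b * g b - f a * g a - RInt (fun x => f x * dg x) a b.
Proof.
  intros Hf Hg Hdf Hdg.
  assert (Hc : forall x, continuous (fun x => f x * dg x) x).
  { intros x; apply (continuous_mult (K := R_AbsRing)); [|apply Hdg].
    apply (ex_derive_continuous (K := R_AbsRing) (V := R_NormedModule)); eexists; apply Hf. }
  apply (is_RInt_unique (V := R_CompleteNormedModule)).
  exact (is_RInt_scal_derive_l f g df dg a b _ (fun x _ => Hf x) (fun x _ => Hg x)
    (fun x _ => Hdf x) (fun x _ => Hdg x)
    (RInt_correct (V := R_CompleteNormedModule) _ _ _ (ex_RInt_of_continuous _ _ _ Hc))).
Qed.

Lemma continuous_sin_pow n x : continuous (fun t => sin t ^ n) x.
Proof. continuity_by_derive; auto. Qed.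

Definition sin_pow_integral (n : nat) (t : R) : R := RInt (fun phi => sin phi ^ n) 0 t.

Definition wallis (n : nat) : R := sin_pow_integral n PI.

Lemma is_derive_sin_pow_integral n t : is_derive (sin_pow_integral n) t (sin t ^ n).
Proof.
  apply (is_derive_RInt (V := R_NormedModule) (fun phi => sin phi ^ n) _ 0);
    [|apply continuous_sin_pow].
  apply filter_forall; intros y; apply (RInt_correct (V := R_CompleteNormedModule)).
  apply ex_RInt_of_continuous, continuous_sin_pow.
Qed.

Lemma continuous_sin_pow_integral n t : continuous (sin_pow_integral n) t.
Proof.
  apply (ex_derive_continuous (K := R_AbsRing) (V := R_NormedModule)).
  eexists; apply is_derive_sin_pow_integral.
Qed.

Lemma wallis_0 : wallis 0 = PI.
Proof.
  unfold wallis, sin_pow_integral; simpl; rewrite RInt_const.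
  unfold scal; simpl; unfold mult; simpl; ring.
Qed.

Lemma wallis_1 : wallis 1 = 2.
Proof.
  unfold wallis, sin_pow_integral; apply is_RInt_unique.
  replace 2 with (minus (- cos PI) (- cos 0))
    by (rewrite cos_PI, cos_0; unfold minus, plus, opp; simpl; ring).
  apply (is_RInt_derive (fun t => - cos t)).
  - intros x _; auto_derive; auto; ring.
  - intros x _; apply (continuous_sin_pow 1).
Qed.

(* Integrate d/dt (- sin^(n+1) t cos t) = (n+2) sin^(n+2) t - (n+1) sin^n t over [0, pi]. *)
Lemma wallis_SS n : INR (S (S n)) * wallis (S (S n)) = INR (S n) * wallis n.
Proof.
  set (F t := - (sin t ^ S n * cos t)).
  set (f t := INR (S (S n)) * sin t ^ S (S n) - INR (S n) * sin t ^ n).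
  assert (HF : is_RInt f 0 PI (minus (F PI) (F 0))).
  { apply (is_RInt_derive (V := R_CompleteNormedModule) F f).
    - intros x _; unfold F, f; auto_derive; auto.
      change (match n with 0%nat => 1 | S _ => INR n + 1 end) with (INR (S n)).
      rewrite !S_INR; simpl pow.
      assert (Hc : cos x * cos x = 1 - sin x * sin x)
        by (generalize (sin2_cos2 x); unfold Rsqr; lra).
      transitivity (- (INR n + 1) * sin x ^ n * (cos x * cos x) + sin x * sin x * sin x ^ n);
        [ring | rewrite Hc; ring].
    - intros x _; unfold f; continuity_by_derive; auto. }
  assert (HW : is_RInt f 0 PI (INR (S (S n)) * wallis (S (S n)) - INR (S n) * wallis n)).
  { apply (is_RInt_minus (V := R_NormedModule)); apply (is_RInt_scal (V := R_NormedModule));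
      apply (RInt_correct (V := R_CompleteNormedModule)), ex_RInt_of_continuous,
        continuous_sin_pow. }
  apply (is_RInt_unique (V := R_CompleteNormedModule)) in HF, HW; rewrite HW in HF.
  unfold F in HF; rewrite sin_PI, sin_0 in HF.
  set (k2 := INR (S (S n))) in *; set (k1 := INR (S n)) in *.
  unfold minus, plus, opp in HF; simpl in HF; lra.
Qed.

Lemma wallis_prod n : INR (S n) * wallis n * wallis (S n) = 2 * PI.
Proof.
  induction n as [|n IH].
  - rewrite wallis_0, wallis_1; simpl; ring.
  - rewrite Rmult_assoc, (Rmult_comm (wallis (S n))), <- Rmult_assoc, wallis_SS; lra.
Qed.

Lemma wallis_ge0 n : 0 <= wallis n.
Proof.
  apply RInt_ge_0; [apply Rlt_le, PI_RGT_0 | apply ex_RInt_of_continuous, continuous_sin_pow |].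
  intros x Hx; apply pow_le, sin_ge_0; lra.
Qed.

Lemma wallis_pos n : 0 < wallis n.
Proof.
  destruct (wallis_ge0 n) as [|Hz]; auto.
  generalize (wallis_prod n) PI_RGT_0; rewrite <- Hz; lra.
Qed.

Lemma wallis_S_le n : wallis (S n) <= wallis n.
Proof.
  apply RInt_le; [apply Rlt_le, PI_RGT_0 | apply ex_RInt_of_continuous, continuous_sin_pow ..|].
  intros x Hx; simpl.
  assert (0 <= sin x) by (apply sin_ge_0; lra).
  assert (0 <= sin x ^ n) by (apply pow_le; lra).
  generalize (SIN_bound x); nra.
Qed.

Lemma wallis_sq_bounds n :
  (INR n + 1) * wallis (S n) ^ 2 <= 2 * PI <= (INR n + 2) * wallis (S n) ^ 2.
Proof.
  assert (P0 := wallis_prod n); assert (P1 := wallis_prod (S n)).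
  assert (D0 := wallis_S_le n); assert (D1 := wallis_S_le (S n)).
  assert (G := wallis_pos (S n)); assert (Hn := pos_INR n).
  rewrite !S_INR in P0; rewrite !S_INR in P1.
  assert (0 <= (INR n + 1) * wallis (S n) * (wallis n - wallis (S n))) by
    (apply Rmult_le_pos; [apply Rmult_le_pos|]; lra).
  assert (0 <= (INR n + 2) * wallis (S n) * (wallis (S n) - wallis (S (S n)))) by
    (apply Rmult_le_pos; [apply Rmult_le_pos|]; lra).
  split; nra.
Qed.

Lemma wallis_ratio_bound n a :
  0 < a -> a ^ 2 * (INR n + 3) = 2 * PI -> Rabs (a / wallis (S n) - 1) <= 2 / (INR n + 3).
Proof.
  intros Ha Ha2.
  destruct (wallis_sq_bounds n) as [Hlo Hhi].
  assert (W := wallis_pos (S n)); set (w := wallis (S n)) in *.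
  assert (Hn := pos_INR n); set (k := INR n) in *.
  assert (HPI := PI_RGT_0).
  assert (Hle : a <= w).
  { apply Rsqr_incr_0_var; [|lra]; unfold Rsqr.
    apply (Rmult_le_reg_r (k + 3)); [lra|]; nra. }
  assert (Hge : w * (k + 1) <= a * (k + 3)).
  { apply Rsqr_incr_0_var; [|nra]; unfold Rsqr.
    transitivity (2 * PI * (k + 1)); [nra|].
    transitivity (2 * PI * (k + 3)); [nra|].
    rewrite <- Ha2; nra. }
  rewrite Rabs_left1.
  - apply (Rmult_le_reg_r (w * (k + 3))); [nra|].
    field_simplify; [nra | lra | lra].
  - apply (Rmult_le_reg_r w); [lra|]; field_simplify; lra.
Qed.

Definition cap_angle (R0 s r : R) : R := acos ((r ^ 2 + R0 ^ 2 - s ^ 2) / (2 * r * R0)).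

Lemma continuous_sqrt_sub_sq_pow (s : R) (m : nat) y :
  continuous (fun y => sqrt (s ^ 2 - y ^ 2) ^ m) y.
Proof.
  apply (continuous_comp (fun y => sqrt (s ^ 2 - y ^ 2)) (fun z => z ^ m)).
  - apply continuous_sqrt_comp; continuity_by_derive; auto.
  - continuity_by_derive; auto.
Qed.

Lemma continuous_sq_mul_sqrt_sub_sq_pow (s : R) (m : nat) y :
  continuous (fun y => y ^ 2 * sqrt (s ^ 2 - y ^ 2) ^ m) y.
Proof.
  apply (continuous_mult (K := R_AbsRing) (fun y => y ^ 2));
    [continuity_by_derive; auto | apply continuous_sqrt_sub_sq_pow].
Qed.

Section CapMass.

Variables (R0 s : R) (m : nat).
Hypotheses (R0_pos : 0 < R0) (s_nonneg : 0 <= s) (s_lt_R0 : s < R0).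

(* No continuity of acos is available; for r > 0 its argument is positive, where
   acos agrees with the atan expression of acos_atan. *)
Lemma continuous_cap_angle r : 0 < r -> continuous (cap_angle R0 s) r.
Proof.
  intros Hr.
  set (u r := (r ^ 2 + R0 ^ 2 - s ^ 2) / (2 * r * R0)).
  assert (Hu : forall r, 0 < r -> 0 < u r) by (intros; unfold u; apply Rdiv_lt_0_compat; nra).
  apply (continuous_ext_loc _ (fun r => atan (sqrt (1 - (u r)²) / u r))).
  - apply (filter_imp (fun r => 0 < r)); [|now apply open_gt].
    intros r' Hr'; symmetry; now apply acos_atan, Hu.
  - apply continuous_atan_comp,
      (continuous_mult (K := R_AbsRing) (fun r => sqrt (1 - (u r)²)) (fun r => / u r)).
    + apply continuous_sqrt_comp; unfold u; continuity_by_derive; nra.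
    + assert (H := Hu r Hr); unfold u in *; continuity_by_derive; repeat split; nra.
Qed.

Lemma continuous_cap_mass_integrand r : 0 < r ->
  continuous (fun r => r * sin_pow_integral (S m) (cap_angle R0 s r)) r.
Proof.
  intros Hr; apply (continuous_mult (K := R_AbsRing) (fun r => r)); [apply continuous_id|].
  apply (continuous_comp (cap_angle R0 s));
    [now apply continuous_cap_angle | apply continuous_sin_pow_integral].
Qed.

(* The substitution r = rho y: on the sphere of radius rho y the cap has
   cos (cap_angle) = q y / R0 and sin (cap_angle) = p y / R0. *)
Let p (y : R) : R := sqrt (s ^ 2 - y ^ 2).
Let q (y : R) : R := sqrt (R0 ^ 2 - s ^ 2 + y ^ 2).
Let rho (y : R) : R := q y + y.
Let drho (y : R) : R := y / q y + 1.
Let g (y : R) : R := y * p y ^ m / (R0 ^ S m * q y).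

Let q_arg_pos y : 0 < R0 ^ 2 - s ^ 2 + y ^ 2.
Proof. nra. Qed.

Let q_pos y : 0 < q y.
Proof. apply sqrt_lt_R0, q_arg_pos. Qed.

Let q_sq y : q y * q y = R0 ^ 2 - s ^ 2 + y ^ 2.
Proof. apply sqrt_sqrt, Rlt_le, q_arg_pos. Qed.

Let p_sq y : -s <= y <= s -> p y * p y = s ^ 2 - y ^ 2.
Proof. intros Hy; apply sqrt_sqrt; nra. Qed.

Let q_le_R0 y : -s <= y <= s -> q y <= R0.
Proof.
  intros Hy; rewrite <- (sqrt_pow2 R0) by lra.
  apply sqrt_le_1_alt; nra.
Qed.

Let rho_pos y : 0 < rho y.
Proof. generalize (q_pos y) (q_sq y); unfold rho; nra. Qed.

Let rho_ends : rho (- s) = R0 - s /\ rho s = R0 + s.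
Proof.
  unfold rho, q; replace ((- s) ^ 2) with (s ^ 2) by ring.
  replace (R0 ^ 2 - s ^ 2 + s ^ 2) with (R0 ^ 2) by ring.
  rewrite sqrt_pow2 by lra; split; ring.
Qed.

Let is_derive_rho y : is_derive rho y (drho y).
Proof.
  generalize (q_pos y) (q_arg_pos y); unfold rho, drho, q; simpl; intros Hq Ha.
  auto_derive; [lra|]; field; lra.
Qed.

Let continuous_rho y : continuous rho y.
Proof.
  apply (ex_derive_continuous (K := R_AbsRing) (V := R_NormedModule)); eexists; apply is_derive_rho.
Qed.

Let continuous_drho y : continuous drho y.
Proof.
  generalize (q_pos y) (q_arg_pos y); unfold drho, q; simpl; intros Hq Ha.
  continuity_by_derive; repeat split; lra.
Qed.

Let continuous_g y : continuous g y.
Proof.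
  apply (continuous_mult (K := R_AbsRing) (fun y => y * p y ^ m) (fun y => / (R0 ^ S m * q y))).
  - apply (continuous_mult (K := R_AbsRing) (fun y => y) (fun y => p y ^ m));
      [apply continuous_id | apply continuous_sqrt_sub_sq_pow].
  - generalize (q_pos y) (q_arg_pos y) (pow_lt R0 (S m) R0_pos); unfold q; simpl; intros Hq Ha HR.
    continuity_by_derive; repeat split; try lra; apply Rgt_not_eq, Rmult_gt_0_compat; lra.
Qed.

Let g_odd y : g (- y) = - g y.
Proof. unfold g, p, q; replace ((- y) ^ 2) with (y ^ 2) by ring; unfold Rdiv; ring. Qed.

Let sqrt_one_minus_q y : -s <= y <= s -> sqrt (1 - (q y / R0)²) = p y / R0.
Proof.
  intros Hy; assert (Hp := p_sq y Hy); assert (Hq := q_sq y).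
  replace (1 - (q y / R0)²) with ((p y / R0)²).
  2:{ unfold Rsqr; replace (1 - q y / R0 * (q y / R0)) with ((R0 * R0 - q y * q y) / (R0 * R0))
        by (field; lra).
      replace (p y / R0 * (p y / R0)) with (p y * p y / (R0 * R0)) by (field; lra).
      rewrite Hp, Hq; f_equal; ring. }
  apply sqrt_Rsqr, Rdiv_le_0_compat, R0_pos; apply sqrt_pos.
Qed.

Let acos_q y : -s <= y <= s -> acos (q y / R0) = atan (p y / q y).
Proof.
  intros Hy; assert (Hq := q_pos y).
  rewrite acos_atan, sqrt_one_minus_q by (auto; apply Rdiv_lt_0_compat; lra).
  f_equal; field; lra.
Qed.

Let cap_angle_rho y : -s <= y <= s -> cap_angle R0 s (rho y) = atan (p y / q y).
Proof.
  intros Hy; rewrite <- acos_q by exact Hy; unfold cap_angle; f_equal.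
  assert (Hq := q_pos y); assert (Hr := rho_pos y).
  replace (rho y ^ 2 + R0 ^ 2 - s ^ 2) with (2 * q y * rho y)
    by (generalize (q_sq y); unfold rho; simpl; lra).
  field; lra.
Qed.

Let sin_atan_pq y : -s <= y <= s -> sin (atan (p y / q y)) = p y / R0.
Proof.
  intros Hy; assert (Hq := q_pos y); assert (HqR := q_le_R0 y Hy).
  rewrite <- (acos_q y Hy), sin_acos, (sqrt_one_minus_q y Hy); [reflexivity|].
  split; [apply Rle_trans with 0; [lra | apply Rdiv_le_0_compat; lra]|].
  now apply (Rdiv_le_1 _ _ R0_pos).
Qed.

Let is_derive_atan_pq y : -s < y < s ->
  is_derive (fun y => atan (p y / q y)) y (- y / (p y * q y)).
Proof.
  intros Hy.
  assert (Hp : 0 < s ^ 2 - y ^ 2) by nra.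
  assert (Hp' : 0 < p y) by now apply sqrt_lt_R0.
  assert (Hq := q_pos y); assert (Ha := q_arg_pos y).
  unfold p, q in *; auto_derive;
    replace (s * (s * 1) + - (y * (y * 1))) with (s ^ 2 - y ^ 2) by ring;
    replace (R0 * (R0 * 1) - s * (s * 1) + y * (y * 1)) with (R0 ^ 2 - s ^ 2 + y ^ 2) by ring.
  - repeat split; lra.
  - set (P := sqrt (s ^ 2 - y ^ 2)) in *; set (Q := sqrt (R0 ^ 2 - s ^ 2 + y ^ 2)) in *.
    field; repeat split; try lra; nra.
Qed.

Let continuous_atan_pq y : continuous (fun y => atan (p y / q y)) y.
Proof.
  apply continuous_atan_comp, (continuous_mult (K := R_AbsRing) p (fun y => / q y)).
  - apply continuous_sqrt_comp; continuity_by_derive; auto.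
  - generalize (q_pos y) (q_arg_pos y); unfold q; simpl; intros Hq Ha.
    continuity_by_derive; repeat split; lra.
Qed.

Let sin_pow_integral_atan_pq y : -s <= y <= s ->
  sin_pow_integral (S m) (atan (p y / q y)) = RInt g y s.
Proof.
  intros Hy.
  set (D t := sin_pow_integral (S m) (atan (p t / q t)) - RInt g t s).
  assert (HD : forall t, -s < t < s -> is_derive D t 0).
  { intros t Ht.
    assert (Hd := is_derive_minus _ _ t _ _
      (is_derive_comp _ _ t _ _ (is_derive_sin_pow_integral (S m) _) (is_derive_atan_pq t Ht))
      (is_derive_RInt_lower g s t continuous_g)).
    assert (Hp : 0 < p t) by (apply sqrt_lt_R0; nra).
    assert (Hq := q_pos t); assert (HR := pow_lt R0 m R0_pos).
    cbv beta in Hd; rewrite sin_atan_pq in Hd by lra.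
    replace 0 with (minus (scal (- t / (p t * q t)) ((p t / R0) ^ S m)) (- g t)); [exact Hd|].
    unfold minus, plus, opp, scal, g; simpl; unfold mult; simpl.
    unfold Rdiv; rewrite Rpow_mult_distr, pow_inv; field; repeat split; lra. }
  destruct (MVT_gen D y s (fun _ => 0)) as [c [_ Hc]].
  - rewrite Rmin_left, Rmax_right by lra; intros t Ht; apply HD; lra.
  - intros t _; apply continuity_pt_filterlim.
    apply (continuous_minus (V := R_NormedModule)
      (fun t => sin_pow_integral (S m) (atan (p t / q t)))).
    + apply (continuous_comp (fun t => atan (p t / q t))); 
        [apply continuous_atan_pq | apply continuous_sin_pow_integral].
    + apply continuous_RInt_lower, continuous_g.
  - assert (Ds : D s = 0).
    { unfold D, p; rewrite Rminus_diag, sqrt_0, Rdiv_0_l, atan_0.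
      unfold sin_pow_integral; rewrite !RInt_point; unfold zero; simpl; ring. }
    unfold D in Ds, Hc; lra.
Qed.

Let RInt_cap_mass_substitution :
  RInt (fun r => r * sin_pow_integral (S m) (cap_angle R0 s r)) (R0 - s) (R0 + s)
  = RInt (fun y => drho y * (rho y * RInt g y s)) (- s) s.
Proof.
  destruct rho_ends as [E1 E2]; rewrite <- E1, <- E2.
  rewrite <- (RInt_comp (V := R_CompleteNormedModule) _ rho drho).
  - apply RInt_ext; rewrite Rmin_left, Rmax_right by lra; intros y Hy.
    rewrite cap_angle_rho, sin_pow_integral_atan_pq by lra; reflexivity.
  - intros y _; apply continuous_cap_mass_integrand, rho_pos.
  - intros y _; split; [apply is_derive_rho | apply continuous_drho].
Qed.

Let RInt_cap_mass_parts :
  RInt (fun y => drho y * (rho y * RInt g y s)) (- s) s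
  = RInt (fun y => rho y ^ 2 / 2 * g y) (- s) s.
Proof.
  set (G y := RInt g y s : R).
  set (F y := rho y ^ 2 / 2).
  assert (HF : forall y, is_derive F y (rho y * drho y)).
  { intros y; replace (rho y * drho y) with (scal (drho y) (rho y)) by apply Rmult_comm.
    apply (is_derive_comp (fun z => z ^ 2 / 2) rho); [|apply is_derive_rho].
    auto_derive; auto; field. }
  assert (HFg : forall y, continuous (fun y => F y * g y) y).
  { intros y; apply (continuous_mult (K := R_AbsRing)); [|apply continuous_g].
    apply (ex_derive_continuous (K := R_AbsRing) (V := R_NormedModule)); eexists; apply HF. }
  assert (HG : G s = 0 /\ G (- s) = 0).
  { unfold G; split; [exact (RInt_point (V := R_CompleteNormedModule) s g)|].
    apply RInt_odd; [apply continuous_g | apply g_odd]. }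
  as_R_eq.
  rewrite (RInt_ext (fun y => drho y * (rho y * G y)) (fun y => rho y * drho y * G y))
    by (intros; ring_R).
  rewrite (RInt_by_parts F _ G (fun y => - g y)).
  - rewrite (RInt_ext (fun y => F y * - g y) (fun y => - (F y * g y))) by (intros; ring_R).
    rewrite (proj1 HG), (proj2 HG), (RInt_opp_R (fun y => F y * g y))
      by now apply ex_RInt_of_continuous.
    unfold F; ring.
  - exact HF.
  - intros y; apply is_derive_RInt_lower, continuous_g.
  - intros y; apply (continuous_mult (K := R_AbsRing));
      [apply continuous_rho | apply continuous_drho].
  - intros y; apply (continuous_opp (V := R_NormedModule)), continuous_g.
Qed.

Lemma RInt_cap_mass :
  RInt (fun r => r * sin_pow_integral (S m) (cap_angle R0 s r)) (R0 - s) (R0 + s)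
  = 2 / R0 ^ S m * RInt (fun y => y ^ 2 * sqrt (s ^ 2 - y ^ 2) ^ m) 0 s.
Proof.
  change (fun y => y ^ 2 * sqrt (s ^ 2 - y ^ 2) ^ m) with (fun y => y ^ 2 * p y ^ m).
  rewrite RInt_cap_mass_substitution, RInt_cap_mass_parts.
  set (o y := (R0 ^ 2 - s ^ 2 + 2 * y ^ 2) / 2 * g y).
  assert (Ho : forall y, continuous o y).
  { intros y; apply (continuous_mult (K := R_AbsRing));
      [continuity_by_derive; auto | apply continuous_g]. }
  assert (He : forall y, continuous (fun y => / R0 ^ S m * (y ^ 2 * p y ^ m)) y).
  { intros y; apply (continuous_mult (K := R_AbsRing) (fun _ => / R0 ^ S m));
      [apply continuous_const | apply continuous_sq_mul_sqrt_sub_sq_pow]. }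
  as_R_eq.
  rewrite (RInt_ext _ (fun y => / R0 ^ S m * (y ^ 2 * p y ^ m) + o y)).
  2:{ intros y _; unfold o, g, rho.
      replace (R0 ^ 2 - s ^ 2 + 2 * y ^ 2) with (q y * q y + y ^ 2) by (rewrite q_sq; ring).
      assert (Hq := q_pos y); assert (HR := pow_lt R0 (S m) R0_pos).
      as_R_eq; field; lra. }
  rewrite RInt_plus_R, (RInt_odd o), (RInt_even (fun y => / R0 ^ S m * (y ^ 2 * p y ^ m))),
    (RInt_scal_R (fun y => y ^ 2 * p y ^ m)).
  - field; apply pow_nonzero; lra.
  - apply ex_RInt_of_continuous, continuous_sq_mul_sqrt_sub_sq_pow.
  - exact He.
  - intros y; unfold p; replace ((- y) ^ 2) with (y ^ 2) by ring; reflexivity.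
  - exact Ho.
  - intros y; unfold o; rewrite g_odd; replace ((- y) ^ 2) with (y ^ 2) by ring; ring.
  - now apply ex_RInt_of_continuous.
  - now apply ex_RInt_of_continuous.
Qed.

End CapMass.

Section Radii.

Variables (N : nat) (tau beta : R) (x : list R).
Hypotheses (N_pos : (0 < N)%nat) (tau_pos : 0 < tau) (beta_pos : 0 < beta) (beta_lt1 : beta < 1).
Hypothesis x_in_ball : vnorm x <= beta * Rad N tau.

Lemma Rad_sq : Rad N tau ^ 2 = 2 * INR N * tau.
Proof. apply pow2_sqrt; generalize (lt_0_INR N N_pos); nra. Qed.

Lemma Rad_pos : 0 < Rad N tau.
Proof. apply sqrt_lt_R0; generalize (lt_0_INR N N_pos); nra. Qed.

Lemma s_of_sq : s_of N tau beta x ^ 2 = beta ^ 2 * Rad N tau ^ 2 - vnorm x ^ 2.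
Proof.
  apply pow2_sqrt; assert (0 <= vnorm x) by apply sqrt_pos.
  assert (vnorm x * vnorm x <= beta * Rad N tau * (beta * Rad N tau))
    by (apply Rmult_le_compat; lra).
  nra.
Qed.

Lemma s_of_lt_Rad : 0 <= s_of N tau beta x < Rad N tau.
Proof.
  split; [apply sqrt_pos|].
  assert (HR := Rad_pos); assert (Hs := s_of_sq); assert (0 <= vnorm x) by apply sqrt_pos.
  destruct (Rlt_dec (s_of N tau beta x) (Rad N tau)) as [|Hge]; [assumption|].
  assert (Rad N tau * Rad N tau <= s_of N tau beta x * s_of N tau beta x)
    by (apply Rmult_le_compat; lra).
  assert (HR2 : 0 < Rad N tau ^ 2) by (apply pow_lt; lra).
  assert (Hb2 : beta ^ 2 < 1) by nra.
  nra.
Qed.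

End Radii.

Section MassRatio.

Variables (m : nat) (tau beta : R) (x : list R).
Hypotheses (tau_pos : 0 < tau) (beta_pos : 0 < beta) (beta_lt1 : beta < 1).
Local Notation N := (S (S (S m))).
Hypothesis x_in_ball : vnorm x <= beta * Rad N tau.
Local Notation R0 := (Rad N tau).
Local Notation s := (s_of N tau beta x).

Lemma mu_closed_form :
  mu N tau beta x
  = 2 / (wallis (S m) * R0 ^ S m) * RInt (fun y => y ^ 2 * sqrt (s ^ 2 - y ^ 2) ^ m) 0 s.
Proof.
  assert (HR := Rad_pos N tau ltac:(lia) tau_pos).
  destruct (s_of_lt_Rad N tau beta x ltac:(lia) tau_pos beta_pos beta_lt1 x_in_ball) as [Hs0 Hs].
  assert (HW := wallis_pos (S m)).
  transitivity (/ wallis (S m) *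
    RInt (fun r => r * sin_pow_integral (S m) (cap_angle R0 s r)) (R0 - s) (R0 + s)).
  - unfold mu; rewrite <- RInt_scal_R.
    + apply RInt_ext; intros r _; unfold h, gamma, theta, wallis, sin_pow_integral, cap_angle.
      change (N - 2)%nat with (S m); unfold wallis, sin_pow_integral in HW; as_R_eq; field; lra.
    + apply (ex_RInt_continuous (V := R_CompleteNormedModule)).
      rewrite Rmin_left, Rmax_right by lra; intros r Hr.
      apply continuous_cap_mass_integrand; lra.
  - rewrite RInt_cap_mass by lra; field; split; [apply pow_nonzero|]; lra.
Qed.

Lemma mu_main_closed_form :
  mu_main N tau beta x
  = / (sqrt (PI * tau) * R0 ^ m) * RInt (fun y => y ^ 2 * sqrt (s ^ 2 - y ^ 2) ^ m) 0 s.
Proof.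
  assert (HR := Rad_pos N tau ltac:(lia) tau_pos).
  destruct (s_of_lt_Rad N tau beta x ltac:(lia) tau_pos beta_pos beta_lt1 x_in_ball) as [Hs0 Hs].
  assert (HR2 := Rad_sq N tau ltac:(lia) tau_pos).
  assert (Hs2 := s_of_sq N tau beta x x_in_ball).
  assert (HPI := PI_RGT_0).
  assert (Hsq : 0 < sqrt (PI * tau)) by (apply sqrt_lt_R0; nra).
  unfold mu_main; replace (N - 3)%nat with m by lia.
  rewrite (RInt_ext _ (fun y => / (beta * R0) ^ m * (y ^ 2 * sqrt (s ^ 2 - y ^ 2) ^ m))).
  - rewrite RInt_scal_R.
    + rewrite Rpow_mult_distr; field; repeat split; try apply pow_nonzero; lra.
    + apply ex_RInt_of_continuous, continuous_sq_mul_sqrt_sub_sq_pow.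
  - rewrite Rmin_left, Rmax_right by lra; intros y Hy.
    assert (HbR : 0 < beta * R0) by nra.
    replace (1 - (y ^ 2 + vnorm x ^ 2) / (2 * INR N * beta ^ 2 * tau))
      with ((sqrt (s ^ 2 - y ^ 2) / (beta * R0)) ^ 2).
    + rewrite sqrt_pow2 by (apply Rdiv_le_0_compat; [apply sqrt_pos | lra]).
      unfold Rdiv; rewrite Rpow_mult_distr, pow_inv; as_R_eq; ring.
    + replace (2 * INR N * beta ^ 2 * tau) with ((beta * R0) ^ 2)
        by (rewrite Rpow_mult_distr, HR2; ring).
      unfold Rdiv; rewrite Rpow_mult_distr, pow2_sqrt by nra.
      rewrite Hs2; field; lra.
Qed.

End MassRatio.

Theorem proposition4p3 (n : nat) (tau beta : R) :
  (1 <= n)%nat -> 0 < tau -> 0 < beta < 1 ->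
  exists C : R,
    forall (N : nat) (x : list R),
      (3 <= N)%nat -> length x = n -> vnorm x <= beta * Rad N tau ->
      exists E : R,
        Rabs E <= C / INR N /\
        mu N tau beta x = (1 + E) * mu_main N tau beta x.
Proof.
  intros _ Htau [Hb0 Hb1]; exists 2; intros N x HN _ Hx.
  destruct N as [|[|[|m]]]; try lia; clear HN.
  assert (HN : INR (S (S (S m))) = INR m + 3) by (rewrite !S_INR; ring).
  assert (HR := Rad_pos (S (S (S m))) tau ltac:(lia) Htau).
  assert (HR2 := Rad_sq (S (S (S m))) tau ltac:(lia) Htau).
  assert (Hsq : 0 < sqrt (PI * tau)) by (apply sqrt_lt_R0; generalize PI_RGT_0; nra).
  set (a := 2 * sqrt (PI * tau) / Rad (S (S (S m))) tau).
  assert (Ha : 0 < a) by (apply Rdiv_lt_0_compat; lra).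
  assert (Ha2 : a ^ 2 * (INR m + 3) = 2 * PI).
  { unfold a, Rdiv; rewrite !Rpow_mult_distr, pow2_sqrt, pow_inv, HR2, HN
      by (generalize PI_RGT_0; nra).
    field; split; [lra | generalize (pos_INR m); lra]. }
  exists (a / wallis (S m) - 1); split.
  - rewrite HN; now apply wallis_ratio_bound.
  - rewrite mu_closed_form, mu_main_closed_form by assumption.
    assert (HW := wallis_pos (S m)).
    unfold a; simpl pow; field; repeat split; try apply pow_nonzero; lra.
Qed.
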